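(* Let $G$ be a group acting without inversions on a tree $T$ and let $A\subseteq B$ be subgroups of $G$, both containing hyperbolic elements. Let $v$ be a vertex of $T_{A}$ (so also of $T_B$), and consider the graph map $\pi_{B}:T_{A}/A \to T_{B}/B$, $[x]_{A}\mapsto[x]_{B}$. \begin{enumerate} \item If the stars are finite, then $|Star([v]_{A})|\leq |G_{v}\cap B|\cdot |Star([v]_{B})|$. \item If moreover $v$ is $B$-degenerate and $B_{v}$ stabilizes each edge of $T_B$ with initial vertex $v$, then the restriction $\pi_{B}: Star([v]_{A}) \to Star([v]_{B})$ is injective. \end{enumerate}
   Context: $T_A\subseteq T_B$ denote the unique minimal invariant subtrees of $A$ and $B$. $Star([v]_A)$ is the set of edges of $T_A/A$ with initial vertex $[v]_A$, and $Star([v]_B)$ the set of edges of $T_B/B$ with initial vertex $[v]_B$. A vertex $v$ is $B$-degenerate if $B_v=B_e$ for some edge $e$ of $T_B$ with initial vertex $v$. *)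

From HB Require Import structures.
From mathcomp Require Import all_boot.
From mathcomp Require Import boolp classical_sets cardinality.
From Stdlib Require Lists.List.

Set Implicit Arguments.
Unset Strict Implicit.
Unset Printing Implicit Defensive.

Local Open Scope classical_set_scope.

Record grp := {
  gcar :> Type;
  gmul : gcar -> gcar -> gcar;
  gone : gcar;
  ginv : gcar -> gcar;
  gmulA : forall x y z, gmul x (gmul y z) = gmul (gmul x y) z;
  gmul1g : forall x, gmul gone x = x;
  gmulVg : forall x, gmul (ginv x) x = gone
}.

Definition subgroup (G : grp) (H : set G) : Prop :=
  H (gone G) /\ (forall x y, H x -> H y -> H (gmul x y)) /\
  (forall x, H x -> H (ginv x)).

(* Paths in a Serre graph given by origin map [org] and reversal [rev];
   terminus of [e] is [org (rev e)].  [is_path x p y] : p is an edge path from x to y. *)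
Fixpoint is_path (V E : Type) (org : E -> V) (rev : E -> E)
    (x : V) (p : seq E) (y : V) : Prop :=
  match p with
  | [::] => x = y
  | e :: p' => org e = x /\ is_path org rev (org (rev e)) p' y
  end.

Fixpoint reduced (E : Type) (rev : E -> E) (p : seq E) : Prop :=
  match p with
  | e :: ((e' :: _) as p') => e' <> rev e /\ reduced rev p'
  | _ => True
  end.

Record GTree (G : grp) := {
  vert : Type;
  edge : Type;
  org : edge -> vert;
  rev : edge -> edge;
  revK : forall e, rev (rev e) = e;
  rev_neq : forall e, rev e <> e;
  vert_inhabited : inhabited vert;
  tree_connected : forall x y, exists p, is_path org rev x p y;
  tree_reduced_uniq : forall x y p q,
      is_path org rev x p y -> reduced rev p ->
      is_path org rev x q y -> reduced rev q -> p = q;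
  actv : G -> vert -> vert;
  acte : G -> edge -> edge;
  actv1 : forall x, actv (gone G) x = x;
  actvM : forall g h x, actv (gmul g h) x = actv g (actv h x);
  acte1 : forall e, acte (gone G) e = e;
  acteM : forall g h e, acte (gmul g h) e = acte g (acte h e);
  act_org : forall g e, org (acte g e) = actv g (org e);
  act_rev : forall g e, rev (acte g e) = acte g (rev e);
  no_inversion : forall g e, acte g e <> rev e
}.

Section Defs.
Variables (G : grp) (T : GTree G).
Local Notation V := (vert T).
Local Notation E := (edge T).

Definition term (e : E) : V := org (rev e).

(* hyperbolic element: fixes no vertex (action without inversions) *)
Definition hyperbolic (g : G) : Prop := forall x : V, actv g x <> x.

Definition subtree (SV : set V) (SE : set E) : Prop :=
  (exists x, SV x) /\
  (forall e, SE e -> SV (org e) /\ SE (rev e)) /\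
  (forall x y, SV x -> SV y ->
     exists p, is_path (@org _ T) (@rev _ T) x p y /\ (forall e, Stdlib.Lists.List.In e p -> SE e)).

Definition invariant (H : set G) (SV : set V) (SE : set E) : Prop :=
  (forall h x, H h -> SV x -> SV (actv h x)) /\
  (forall h e, H h -> SE e -> SE (acte h e)).

Definition minimal_invariant_subtree (H : set G) (SV : set V) (SE : set E) : Prop :=
  subtree SV SE /\ invariant H SV SE /\
  (forall SV' SE', subtree SV' SE' -> invariant H SV' SE' ->
     SV' `<=` SV -> SE' `<=` SE -> SV' = SV /\ SE' = SE).

Definition vorbit (H : set G) (x : V) : set V := [set y | exists h, H h /\ y = actv h x].
Definition eorbit (H : set G) (e : E) : set E := [set f | exists h, H h /\ f = acte h e].

Definition vstab (H : set G) (x : V) : set G := [set h | H h /\ actv h x = x].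
Definition estab (H : set G) (e : E) : set G := [set h | H h /\ acte h e = e].

(* Star([v]_H) in the quotient graph SE/H: the H-orbits of edges of the
   subtree whose initial vertex lies in the H-orbit of v *)
Definition star (H : set G) (SE : set E) (v : V) : set (set E) :=
  [set S | exists e, SE e /\ vorbit H v (org e) /\ S = eorbit H e].

(* the graph map [x]_A |-> [x]_B on edge classes: B-saturation *)
Definition proj_edge (B : set G) (S : set E) : set E :=
  [set f | exists e, S e /\ exists b, B b /\ f = acte b e].

Definition degenerate (B : set G) (SE : set E) (v : V) : Prop :=
  exists e, SE e /\ org e = v /\ vstab B v = estab B e.

End Defs.

Arguments hyperbolic {G} T g.
Arguments subtree {G} T SV SE.
Arguments invariant {G} T H SV SE.
Arguments minimal_invariant_subtree {G} T H SV SE.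
Arguments vorbit {G} T H x.
Arguments eorbit {G} T H e.
Arguments vstab {G} T H x.
Arguments estab {G} T H e.
Arguments star {G} T H SE v.
Arguments proj_edge {G} T B S.
Arguments degenerate {G} T B SE v.

From Pilot Require Import Defs.
From HB Require Import structures.
From mathcomp Require Import all_boot.
From mathcomp Require Import boolp classical_sets cardinality.
From Stdlib Require List.

(* Every class in Star([v]_A) is the A-orbit of an edge e of T_A at v. Since
   T_A lies in T_B, [e]_B is in Star([v]_B); fixing a representative r_C at v
   of each class C of Star([v]_B), e = b r_C for some b in B_v, so the image
   of B_v x Star([v]_B) under (b, C) |-> [b r_C]_A contains Star([v]_A). For
   injectivity, [e1]_B = [e2]_B with both edges at v means e1 = b e2 with b in
   B_v, and such b fixes e2.
   That T_A lies in T_B is where hyperbolicity enters: a hyperbolic a in A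
   leaves both subtrees invariant, and two a-invariant subtrees must meet.
   Otherwise, prolonging a shortest path p from x in one to y in the other by
   paths inside the subtrees from a x to x and from y to a y gives a reduced
   path from a x to a y, which must be a p; comparing lengths forces a x = x.
   Minimality of T_A then applies to the A-invariant subtree T_A meet T_B. *)

Set Implicit Arguments.
Unset Strict Implicit.
Unset Printing Implicit Defensive.

Local Open Scope classical_set_scope.
Local Open Scope card_scope.

Section Actions.
Variables (G : grp) (T : GTree G).

Lemma actvK (g : G) (x : vert T) : actv (ginv g) (actv g x) = x.
Proof. by rewrite -actvM gmulVg actv1. Qed.

Lemma acteK (g : G) (e : edge T) : acte (ginv g) (acte g e) = e.
Proof. by rewrite -acteM gmulVg acte1. Qed.

End Actions.

Section Paths.
Variables (G : grp) (T : GTree G).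
Local Notation V := (vert T).
Local Notation E := (edge T).
Local Notation erev := (@Defs.rev G T).
Local Notation tpath := (@is_path V E (@org G T) erev).
Local Notation treduced := (@reduced E erev).

Lemma is_path_cat x p q z :
  tpath x (p ++ q) z <-> exists2 y, tpath x p y & tpath y q z.
Proof.
elim: p x => [|e p IH] x /=; first by split=> [|[y ->]]; [exists x|].
rewrite IH; split=> [[-> [y h1 h2]]|[y [-> h1] h2]]; last by split=> //; exists y.
by exists y.
Qed.

Lemma In_cat (e : E) s1 s2 : List.In e (s1 ++ s2) <-> List.In e s1 \/ List.In e s2.
Proof. exact: List.in_app_iff. Qed.

Lemma is_path_act (g : G) x p y :
  tpath x p y -> tpath (actv g x) (map (acte g) p) (actv g y).
Proof.
elim: p x => [|e p IH] x /=; first by move->.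
by case=> <- /IH h; rewrite act_rev !act_org.
Qed.

Lemma not_reduced_backtrack p :
  ~ treduced p -> exists l e r, p = l ++ [:: e, erev e & r].
Proof.
elim: p => [|e [|e' p] IH] //= nred.
case: (pselect (e' = erev e)) => [->|ne]; first by exists [::], e, p.
have [|l [f [r ->]]] := IH; first by move=> red; apply: nred.
by exists (e :: l), f, r.
Qed.

Lemma shortest_path_reduced (P : set E) x p y :
  tpath x p y -> [set e | List.In e p] `<=` P ->
  (forall q, tpath x q y -> [set e | List.In e q] `<=` P -> size p <= size q) ->
  treduced p.
Proof.
move=> hp hP hmin; apply: contrapT => /not_reduced_backtrack [l [e [r def_p]]].
have /hmin : tpath x (l ++ r) y.
  move: hp; rewrite def_p => /is_path_cat [z hl /= [oe [_]]].
  by rewrite Defs.revK oe => hr; apply/is_path_cat; exists z.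
have /[swap]/[apply] : [set f | List.In f (l ++ r)] `<=` P.
  move=> f /In_cat inf; apply: hP; rewrite /= def_p In_cat /=.
  by case: inf; tauto.
by rewrite def_p !size_cat /= !addnS ltnNge leqW.
Qed.

Lemma exists_reduced_path (P : set E) x y :
  (exists p, tpath x p y /\ [set e | List.In e p] `<=` P) ->
  exists p, [/\ tpath x p y, [set e | List.In e p] `<=` P & treduced p].
Proof.
move=> [p0 hp0].
have exn : exists n, `[< exists p, [/\ tpath x p y, [set e | List.In e p] `<=` P
                                     & size p = n] >].
  by exists (size p0); apply/asboolP; exists p0; case: hp0.
case: (ex_minnP exn) => _ /asboolP [p [hp hP <-]] hmin.
exists p; split=> //; apply: (shortest_path_reduced hp hP) => q hq hQ.
by apply: hmin; apply/asboolP; exists q.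
Qed.

Lemma subtree_reduced_path (SV : set V) (SE : set E) x y :
  subtree T SV SE -> SV x -> SV y ->
  exists p, [/\ tpath x p y, [set e | List.In e p] `<=` SE & treduced p].
Proof. by case=> _ [_ conn] hx hy; apply: exists_reduced_path; apply: conn. Qed.

Lemma reduced_cat p q :
  treduced p -> treduced q ->
  (forall p' f e q', p = rcons p' f -> q = e :: q' -> e <> erev f) ->
  treduced (p ++ q).
Proof.
elim: p => [|f [|f' p] IH] rp rq junction //=.
  clear IH; case: q rq junction => [|e q] //= rq junction.
  by split=> //; apply: (junction [::]).
case: rp => nbt rp; split=> //; apply: IH => // p' g e q' def_p.
by apply: (junction (f :: p')); rewrite def_p.
Qed.

Section Bridge.
Variables (V1 V2 : set V) (E1 E2 : set E).
Hypotheses (st1 : subtree T V1 E1) (st2 : subtree T V2 E2).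
Hypothesis disjV : forall x, V1 x -> ~ V2 x.

Definition bridge x p y := [/\ V1 x, V2 y, tpath x p y &
  forall x' q y', V1 x' -> V2 y' -> tpath x' q y' -> size p <= size q].

Lemma exists_bridge : exists x p y, bridge x p y.
Proof.
have [[x0 hx0] [y0 hy0]] := (st1.1, st2.1).
have [p0 hp0] := tree_connected x0 y0.
have exn : exists n, `[< exists x p y, [/\ V1 x, V2 y, tpath x p y & size p = n] >].
  by exists (size p0); apply/asboolP; exists x0, p0, y0.
case: (ex_minnP exn) => _ /asboolP [x [p [y [hx hy hp <-]]]] hmin.
exists x, p, y; split=> // x' q y' hx' hy' hq.
by apply: hmin; apply/asboolP; exists x', q, y'.
Qed.

Lemma bridge_reduced x p y : bridge x p y -> treduced p.
Proof.
move=> [hx hy hp hmin].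
by apply: (@shortest_path_reduced setT x p y) => // q hq _; exact: hmin hx hy hq.
Qed.

Lemma bridge_act (a : G) x p y :
  (forall z, V1 z -> V1 (actv a z)) -> (forall z, V2 z -> V2 (actv a z)) ->
  bridge x p y -> bridge (actv a x) (map (acte a) p) (actv a y).
Proof.
move=> inv1 inv2 [hx hy hp hmin]; split; [exact: inv1|exact: inv2|exact: is_path_act|].
by rewrite size_map.
Qed.

Lemma bridge_neq_nil x y : ~ bridge x [::] y.
Proof. by case=> hx hy /= exy _; apply: (disjV hx); rewrite exy. Qed.

Lemma bridge_first x e p y : bridge x (e :: p) y -> ~ V1 (org (erev e)).
Proof. by case=> _ hy [_ hp] hmin /(hmin _ _ _)/(_ hy hp); rewrite ltnn. Qed.

Lemma bridge_last x p f y : bridge x (rcons p f) y -> ~ V2 (org f).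
Proof.
case=> hx _; rewrite -cats1 => /is_path_cat [z hp [-> _]] hmin /(hmin _ _ _ hx)/(_ hp).
by rewrite size_cat addn1 ltnn.
Qed.

Lemma bridge_extend_reduced x p y q1 q2 :
  bridge x p y ->
  [set e | List.In e q1] `<=` E1 -> treduced q1 ->
  [set e | List.In e q2] `<=` E2 -> treduced q2 ->
  treduced (q1 ++ p ++ q2).
Proof.
move=> bxy inq1 rq1 inq2 rq2.
have rev_closed SV SE e : subtree T SV SE -> SE e -> SV (org e) /\ SE (erev e).
  by case=> _ [+ _]; apply.
(* A backtrack at either junction would give a shorter bridge. *)
have rpq2 : treduced (p ++ q2).
  apply: (reduced_cat (bridge_reduced bxy) rq2) => p' f g q' def_p def_q2 gf.
  rewrite def_p in bxy; apply: (bridge_last bxy).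
  have /(rev_closed _ _ _ st2) [_] : E2 g by apply: inq2; rewrite /= def_q2; left.
  by rewrite gf Defs.revK => /(rev_closed _ _ _ st2) [].
apply: (reduced_cat rq1 rpq2) => q' f e r def_q1.
case: p bxy {rpq2} => [/bridge_neq_nil //|e' p bxy [<- _] ef].
apply: (bridge_first bxy); rewrite ef Defs.revK.
have /(rev_closed _ _ _ st1) [] // : E1 f.
by apply: inq1; rewrite /= def_q1 -cats1 In_cat; right; left.
Qed.

End Bridge.

Lemma hyperbolic_invariant_subtrees_meet (a : G) V1 V2 E1 E2 :
  hyperbolic T a -> subtree T V1 E1 -> subtree T V2 E2 ->
  (forall z, V1 z -> V1 (actv a z)) -> (forall z, V2 z -> V2 (actv a z)) ->
  V1 `&` V2 !=set0.
Proof.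
move=> hyp st1 st2 inv1 inv2; apply: contrapT => disj.
have disjV x : V1 x -> ~ V2 x by move=> h1 h2; apply: disj; exists x.
have [x [p [y bxy]]] := exists_bridge st1 st2.
have [hx hy hp _] := bxy.
have [q1 [hq1 inq1 rq1]] := subtree_reduced_path st1 (inv1 _ hx) hx.
have [q2 [hq2 inq2 rq2]] := subtree_reduced_path st2 hy (inv2 _ hy).
have abxy := bridge_act inv1 inv2 bxy.
have [_ _ haxy _] := abxy.
have hlong : tpath (actv a x) (q1 ++ p ++ q2) (actv a y).
  by apply/is_path_cat; exists x => //; apply/is_path_cat; exists y.
have := tree_reduced_uniq hlong (bridge_extend_reduced st1 st2 disjV bxy inq1 rq1 inq2 rq2)
  haxy (bridge_reduced abxy).
move=> /(congr1 size); rewrite !size_cat size_map.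
case: q1 hq1 {inq1 rq1 hlong} => [/= ax _|f q1 _ /= /eqP]; first exact: hyp ax.
by rewrite addnCA addSn addnS eqn_leq leqNgt ltnS leq_addr.
Qed.

End Paths.

Section Subtrees.
Variables (G : grp) (T : GTree G).
Local Notation V := (vert T).
Local Notation E := (edge T).

Lemma subtreeI (V1 V2 : set V) (E1 E2 : set E) :
  subtree T V1 E1 -> subtree T V2 E2 -> V1 `&` V2 !=set0 ->
  subtree T (V1 `&` V2) (E1 `&` E2).
Proof.
move=> st1 st2 meet; split=> //; split.
  move=> e [/st1.2.1 [o1 r1] /st2.2.1 [o2 r2]]; split; by split.
move=> y z [y1 y2] [z1 z2].
have [q1 [hq1 in1 rq1]] := subtree_reduced_path st1 y1 z1.
have [q2 [hq2 in2 rq2]] := subtree_reduced_path st2 y2 z2.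
have eq12 := tree_reduced_uniq hq1 rq1 hq2 rq2.
exists q1; split=> // e he; split; [exact: in1 | by apply: in2; rewrite /= -eq12].
Qed.

Lemma minimal_invariant_subtree_sub (A B : set G) (a : G) TAv TAe TBv TBe :
  A `<=` B -> A a -> hyperbolic T a ->
  minimal_invariant_subtree T A TAv TAe ->
  subtree T TBv TBe -> Defs.invariant T B TBv TBe ->
  TAv `<=` TBv /\ TAe `<=` TBe.
Proof.
move=> AB Aa hyp [stA [[iAv iAe] minA]] stB [iBv iBe].
have meet : TAv `&` TBv !=set0.
  apply: (hyperbolic_invariant_subtrees_meet hyp stA stB) => x hx.
    exact: iAv.
  by apply: iBv => //; apply: AB.
have invI : Defs.invariant T A (TAv `&` TBv) (TAe `&` TBe).
  split=> [h x Ah [hA hB]|h e Ah [hA hB]]; split.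
  - exact: iAv.
  - by apply: iBv => //; apply: AB.
  - exact: iAe.
  - by apply: iBe => //; apply: AB.
by have [/setIidPl ? /setIidPl ?] := minA _ _ (subtreeI stA stB meet) invI
  (@subIsetl _ _ _) (@subIsetl _ _ _).
Qed.

End Subtrees.

Section Stars.
Variables (G : grp) (T : GTree G).
Local Notation V := (vert T).
Local Notation E := (edge T).
Implicit Types (H : set G) (SE : set E).

Lemma eorbit_refl H e : subgroup H -> eorbit T H e e.
Proof. by case=> H1 _; exists (gone G); rewrite acte1. Qed.

Lemma eorbit_act H h e : subgroup H -> H h -> eorbit T H (acte h e) = eorbit T H e.
Proof.
move=> [_ [HM HV]] Hh; apply/seteqP; split=> f [k [Hk ->]].
  by exists (gmul k h); rewrite acteM; split=> //; apply: HM.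
by exists (gmul k (ginv h)); rewrite acteM acteK; split=> //; apply: HM => //; apply: HV.
Qed.

Lemma eorbit_vstab H e f :
  eorbit T H e f -> org f = org e -> exists2 h, vstab T H (org e) h & f = acte h e.
Proof. by move=> [h [Hh ->]]; rewrite act_org => fix_h; exists h. Qed.

Lemma star_eorbit H SE v e :
  subgroup H -> SE e -> org e = v -> star T H SE v (eorbit T H e).
Proof.
by case=> H1 _ SEe oe; exists e; split=> //; split=> //; exists (gone G); rewrite actv1.
Qed.

Lemma star_repr H SE v S :
  subgroup H -> (forall h e, H h -> SE e -> SE (acte h e)) ->
  star T H SE v S -> exists e, [/\ SE e, org e = v & S = eorbit T H e].
Proof.
move=> sH iSE [e [SEe [[h [Hh oe]] ->]]]; have [_ [_ HV]] := sH.
exists (acte (ginv h) e); split; first exact: iSE (HV _ Hh) SEe.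
  by rewrite act_org oe actvK.
by rewrite eorbit_act //; apply: HV.
Qed.

Lemma proj_edge_eorbit A B e :
  subgroup A -> subgroup B -> A `<=` B ->
  proj_edge T B (eorbit T A e) = eorbit T B e.
Proof.
move=> sA [_ [BM _]] AB; apply/seteqP; split=> f.
  move=> [_ [[a [Aa ->]] [b [Bb ->]]]]; exists (gmul b a).
  by rewrite acteM; split=> //; apply: BM => //; apply: AB.
by move=> [b [Bb ->]]; exists e; split; [exact: eorbit_refl | exists b].
Qed.

Section StarBound.
Variables (A B : set G) (TAe TBe : set E) (v : V).
Hypotheses (sA : subgroup A) (sB : subgroup B) (AB : A `<=` B) (TAB : TAe `<=` TBe).
Hypotheses (iAe : forall a e, A a -> TAe e -> TAe (acte a e))
           (iBe : forall b e, B b -> TBe e -> TBe (acte b e)).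

Section Representatives.
Variable rep : set E -> E.
Hypothesis repP : forall C, star T B TBe v C -> C (rep C) /\ org (rep C) = v.

Lemma star_sub_image :
  star T A TAe v `<=`
    (fun bC => eorbit T A (acte bC.1 (rep bC.2))) @` (vstab T B v `*` star T B TBe v).
Proof.
move=> S /(star_repr sA iAe) [e [TAe_e oe ->]].
have starBe := star_eorbit sB (TAB TAe_e) oe.
have [inC orep] := repP starBe.
have [b [Bb fix_b] def_r] := eorbit_vstab inC (etrans orep (esym oe)).
have [_ [_ BV]] := sB.
exists (ginv b, eorbit T B e); last by rewrite /= def_r acteK.
split=> //=; split; first exact: BV.
by rewrite -oe -{1}fix_b actvK.
Qed.

End Representatives.

Lemma star_card_le : star T A TAe v #<= vstab T B v `*` star T B TBe v.
Proof.
have [[S0 /(star_repr sA iAe) [e0 _]]|/nonemptyPn ->] := pselect (star T A TAe v !=set0);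
  last exact: card_ge0.
(* The edge e0 serves as a default representative for classes outside the star. *)
pose at_v C r := star T B TBe v C -> C r /\ org r = v.
have [rep repP] : {rep : set E -> E & forall C, at_v C (rep C)}.
  apply: choice => C; case: (pselect (star T B TBe v C)) => [starC|]; last by exists e0.
  have [e [_ oe ->]] := star_repr sB iBe starC.
  by exists e => _; split=> //; apply: eorbit_refl.
apply: card_le_trans (card_image_le _ _).
exact/subset_card_le/(star_sub_image repP).
Qed.

Lemma star_proj_edge_inj :
  (forall e, TBe e -> org e = v -> forall b, vstab T B v b -> acte b e = e) ->
  forall S1 S2, star T A TAe v S1 -> star T A TAe v S2 ->
  proj_edge T B S1 = proj_edge T B S2 -> S1 = S2.
Proof.
move=> fixB S1 S2 /(star_repr sA iAe) [e1 [_ o1 ->]] /(star_repr sA iAe) [e2 [TAe2 o2 ->]].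
rewrite !proj_edge_eorbit // => eqB.
have := eorbit_refl e1 sB; rewrite eqB => /eorbit_vstab.
rewrite o1 o2 => /(_ erefl) [b stab_b ->].
by rewrite fixB //; apply: TAB.
Qed.

End StarBound.

End Stars.

Theorem lemma3p2 (G : grp) (T : GTree G) (A B : set G)
  (TAv TBv : set (vert T)) (TAe TBe : set (edge T)) (v : vert T) :
  subgroup A -> subgroup B -> A `<=` B ->
  (exists a, A a /\ hyperbolic T a) -> (exists b, B b /\ hyperbolic T b) ->
  minimal_invariant_subtree T A TAv TAe ->
  minimal_invariant_subtree T B TBv TBe ->
  TAv v ->
  (finite_set (star T A TAe v) -> finite_set (star T B TBe v) ->
     star T A TAe v #<= (vstab T B v `*` star T B TBe v)) /\
  (finite_set (star T A TAe v) -> finite_set (star T B TBe v) ->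
     degenerate T B TBe v ->
     (forall e, TBe e -> org e = v -> forall b, vstab T B v b -> acte b e = e) ->
     forall S1 S2, star T A TAe v S1 -> star T A TAe v S2 ->
       proj_edge T B S1 = proj_edge T B S2 -> S1 = S2).
Proof.
move=> sA sB AB [a [Aa hyp]] _ minA [stB [invB _]] _.
have [_ TAB] := minimal_invariant_subtree_sub AB Aa hyp minA stB invB.
have [_ [[_ iAe] _]] := minA; have [_ iBe] := invB.
split=> [_ _ | _ _ _]; first exact: star_card_le.
exact: star_proj_edge_inj.
Qed.
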